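(* Let $(\mathbf F,\mathbf A)$ be an enriched cut-free Gentzen $ru$-frame with $\mathbf F=(G,T,N,K)$. For all $a,b\in A$ and closed sets $X,Y$ of $\mathbf F$: (1) if $1^{\mathbf A}$ is defined, then $1^{\mathbf A}\in\gamma_N(\{\varepsilon\})\subseteq\{1^{\mathbf A}\}^{\lhd}$; (2) for $\bullet\in\{\wedge,\vee,\cdot,\backslash,/\}$: if $a\bullet^{\mathbf A}b$ is defined, $a\in X\subseteq\{a\}^{\lhd}$ and $b\in Y\subseteq\{b\}^{\lhd}$, then $a\bullet^{\mathbf A}b\in X\bullet^{\mathbf F^+}Y\subseteq\{a\bullet^{\mathbf A}b\}^{\lhd}$; (3) if $!^{\mathbf A}a$ is defined and $a\in X\subseteq\{a\}^{\lhd}$, then $!^{\mathbf A}a\in\, !X\subseteq\{!^{\mathbf A}a\}^{\lhd}$; (4) if $(\mathbf F,\mathbf A)$ is an enriched cut-free Gentzen $ruz$-frame and $0^{\mathbf A}$ is defined, then $0^{\mathbf A}\in\{\epsilon\}^{\lhd}\subseteq\{0^{\mathbf A}\}^{\lhd}$; (5) if $(\mathbf F,\mathbf A)$ is moreover an enriched Gentzen frame (i.e. satisfies [cut]), then the map $a\mapsto\{a\}^{\lhd}$ is a homomorphism of partial algebras from $\mathbf A$ to $\mathbf F^+$ (whenever $f^{\mathbf A}(\vec a)$ is defined, its image equals $f^{\mathbf F^+}$ applied to the images); (6) if $N$ is antisymmetric on $A$ ($aNb$ and $bNa$ imply $a=b$ for $a,b\in A$), then the map $a\mapsto\{a\}^{\lhd}$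 is injective.
   Context: Enriched $ru$-frame: $\mathbf F=(G,T,N,K)$ with $(G,\cdot,\varepsilon)$ a unital groupoid (not necessarily associative), $T$ a set, $N\subseteq G\times T$ nuclear (for all $x,y\in G,z\in T$ there are $x\backslash\!\!\backslash z, z/\!\!/y\in T$ with $x\cdot y\,N\,z\iff y\,N\,x\backslash\!\!\backslash z\iff x\,N\,z/\!\!/y$), $K$ a sub-unital-groupoid of $G$; an enriched $ruz$-frame additionally has $\epsilon\in T$. $X^{\rhd}=\{t\in T\mid\forall x\in X\,xNt\}$, $Y^{\lhd}=\{g\in G\mid\forall y\in Y\,gNy\}$, $\gamma_N(X)=X^{\rhd\lhd}$; closed sets are those with $\gamma_N(X)=X$. $\mathbf F^+$: universe the closed sets, $X\wedge Y=X\cap Y$, $X\vee Y=\gamma_N(X\cup Y)$, $X\cdot Y=\gamma_N(X\circ Y)$ with $X\circ Y=\{x\cdot y\mid x\in X,y\in Y\}$, $X\backslash Y=\{z\mid X\circ\{z\}\subseteq Y\}$, $Y/X=\{z\mid \{z\}\circ X\subseteq Y\}$, $!X=\gamma_N(X\cap K)$, unit $\gamma_N(\{\varepsilon\})$, and in the $ruz$ case zero $\{\epsilon\}^{\lhd}$. Enriched cut-free Gentzen $ru$-frame: a pair $(\mathbf F,\mathbf A)$ with $\mathbf F$ an enriched $ru$-frame and $\mathbf A$ a partial algebra in $\{\wedge,\vee,\cdot,\backslash,/,!,1\}$, together with injections of $A$ into $G$ and into $T$ and of $A^!=\{!^{\mathbf A}a\mid a\in\operatorname{dom}!^{\mathbf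 A}\}$ into $K$ (elements of $A$ are identified with their images; in particular $\{a\}^{\lhd}$ uses $a$ as an element of $T$), such that for all $x,y\in G$, $z\in T$, $a,a_1,a_2,b\in A$, $k\in K$ (whenever the displayed operations of $\mathbf A$ are defined): $\varepsilon\,N\,1^{\mathbf A}$; $a\,N\,a$; $\varepsilon Nz\Rightarrow 1^{\mathbf A}Nz$; $a\cdot b\,N\,z\Rightarrow a\cdot^{\mathbf A}b\,N\,z$; $xNa,\,yNb\Rightarrow x\cdot y\,N\,a\cdot^{\mathbf A}b$; $xNa,\,bNz\Rightarrow x\cdot(a\backslash^{\mathbf A}b)\,N\,z$; $a\cdot x\,N\,b\Rightarrow x\,N\,a\backslash^{\mathbf A}b$; $xNa,\,bNz\Rightarrow (b/^{\mathbf A}a)\cdot x\,N\,z$; $x\cdot a\,N\,b\Rightarrow x\,N\,b/^{\mathbf A}a$; $a_iNz\Rightarrow a_1\wedge^{\mathbf A}a_2\,N\,z$; $xNa,\,xNb\Rightarrow x\,N\,a\wedge^{\mathbf A}b$; $aNz,\,bNz\Rightarrow a\vee^{\mathbf A}b\,N\,z$; $xNa_i\Rightarrow x\,N\,a_1\vee^{\mathbf A}a_2$; $aNz\Rightarrow !^{\mathbf A}a\,N\,z$; $kNa\Rightarrow k\,N\,!^{\mathbf A}a$. An enriched cut-free Gentzen $ruz$-frame uses an enriched $ruz$-frame and a partial algebra with additional constant $0$, and also requires $0^{\mathbf A}N\epsilon$ and $xN\epsilon\Rightarrow xN0^{\mathbf A}$. An enriched Gentzen frame additionally satisfies [cut]: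 $xNa$ and $aNz$ imply $xNz$ (for $x\in G$, $a\in A$, $z\in T$). *)

Set Implicit Arguments.

Record ruFrame := {
  G : Type;
  T : Type;
  gmul : G -> G -> G;
  geps : G;
  N : G -> T -> Prop;
  K : G -> Prop;
  ldivT : G -> T -> T;
  rdivT : T -> G -> T;
  unit_l : forall x, gmul geps x = x;
  unit_r : forall x, gmul x geps = x;
  nuclear_l : forall x y z, N (gmul x y) z <-> N y (ldivT x z);
  nuclear_r : forall x y z, N (gmul x y) z <-> N x (rdivT z y);
  K_eps : K geps;
  K_mul : forall x y, K x -> K y -> K (gmul x y)
}.

Arguments gmul {r} _ _.
Arguments geps {r}.
Arguments N {r} _ _.
Arguments K {r} _.

Section Galois.
Variable F : ruFrame.

Definition subset {U : Type} (X Y : U -> Prop) : Prop := forall u, X u -> Y u.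

Definition rhd (X : G F -> Prop) : T F -> Prop := fun t => forall x, X x -> N x t.
Definition lhd (Y : T F -> Prop) : G F -> Prop := fun g => forall y, Y y -> N g y.
Definition gammaN (X : G F -> Prop) : G F -> Prop := lhd (rhd X).
Definition closed (X : G F -> Prop) : Prop := gammaN X = X.

Definition meetF (X Y : G F -> Prop) : G F -> Prop := fun x => X x /\ Y x.
Definition joinF (X Y : G F -> Prop) : G F -> Prop := gammaN (fun x => X x \/ Y x).
Definition circ (X Y : G F -> Prop) : G F -> Prop :=
  fun z => exists x y, X x /\ Y y /\ z = gmul x y.
Definition mulF (X Y : G F -> Prop) : G F -> Prop := gammaN (circ X Y).
Definition ldivF (X Y : G F -> Prop) : G F -> Prop :=
  fun z => forall x, X x -> Y (gmul x z).
(** Y / X = {z | {z} o X subset Y}; written rdivF Y X *)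
Definition rdivF (Y X : G F -> Prop) : G F -> Prop :=
  fun z => forall x, X x -> Y (gmul z x).
Definition bangF (X : G F -> Prop) : G F -> Prop := gammaN (fun x => X x /\ K x).
Definition oneF : G F -> Prop := gammaN (fun x => x = geps).
Definition zeroF (ez : T F) : G F -> Prop := lhd (fun t => t = ez).

End Galois.

Record GentzenRU (F : ruFrame) := {
  A : Type;
  meetA : A -> A -> option A;
  joinA : A -> A -> option A;
  mulA  : A -> A -> option A;
  ldivA : A -> A -> option A;
  rdivA : A -> A -> option A;       (* rdivA b a = b / a *)
  bangA : A -> option A;
  oneA  : option A;
  inG : A -> G F;
  inT : A -> T F;
  inG_inj : forall a b, inG a = inG b -> a = b;
  inT_inj : forall a b, inT a = inT b -> a = b;
  bang_K : forall a c, bangA a = Some c -> K (inG c);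
  g_one1 : forall o, oneA = Some o -> N geps (inT o);
  g_id : forall a, N (inG a) (inT a);
  g_one2 : forall o z, oneA = Some o -> N geps z -> N (inG o) z;
  g_mulL : forall a b c z, mulA a b = Some c ->
      N (gmul (inG a) (inG b)) z -> N (inG c) z;
  g_mulR : forall a b c x y, mulA a b = Some c ->
      N x (inT a) -> N y (inT b) -> N (gmul x y) (inT c);
  g_ldivL : forall a b c x z, ldivA a b = Some c ->
      N x (inT a) -> N (inG b) z -> N (gmul x (inG c)) z;
  g_ldivR : forall a b c x, ldivA a b = Some c ->
      N (gmul (inG a) x) (inT b) -> N x (inT c);
  g_rdivL : forall a b c x z, rdivA b a = Some c ->
      N x (inT a) -> N (inG b) z -> N (gmul (inG c) x) z;
  g_rdivR : forall a b c x, rdivA b a = Some c ->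
      N (gmul x (inG a)) (inT b) -> N x (inT c);
  g_meetL1 : forall a1 a2 c z, meetA a1 a2 = Some c -> N (inG a1) z -> N (inG c) z;
  g_meetL2 : forall a1 a2 c z, meetA a1 a2 = Some c -> N (inG a2) z -> N (inG c) z;
  g_meetR : forall a b c x, meetA a b = Some c ->
      N x (inT a) -> N x (inT b) -> N x (inT c);
  g_joinL : forall a b c z, joinA a b = Some c ->
      N (inG a) z -> N (inG b) z -> N (inG c) z;
  g_joinR1 : forall a1 a2 c x, joinA a1 a2 = Some c -> N x (inT a1) -> N x (inT c);
  g_joinR2 : forall a1 a2 c x, joinA a1 a2 = Some c -> N x (inT a2) -> N x (inT c);
  g_bangL : forall a c z, bangA a = Some c -> N (inG a) z -> N (inG c) z;
  g_bangR : forall a c k, bangA a = Some c -> K k -> N k (inT a) -> N k (inT c)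
}.

Arguments A {F} _.
Arguments meetA {F} _ _ _.
Arguments joinA {F} _ _ _.
Arguments mulA {F} _ _ _.
Arguments ldivA {F} _ _ _.
Arguments rdivA {F} _ _ _.
Arguments bangA {F} _ _.
Arguments oneA {F} _.
Arguments inG {F} _ _.
Arguments inT {F} _ _.

(** Extra conditions making (F,A) an enriched cut-free Gentzen ruz-frame:
    a distinguished ez in T (the epsilon of the ruz-frame) and a partial
    constant z0 (the 0 of A). *)
Definition ruzCond {F : ruFrame} (P : GentzenRU F) (ez : T F) (z0 : option (A P)) : Prop :=
  forall o, z0 = Some o -> N (inG P o) ez /\ (forall x, N x ez -> N x (inT P o)).

Definition cutCond {F : ruFrame} (P : GentzenRU F) : Prop :=
  forall (x : G F) (a : A P) (z : T F), N x (inT P a) -> N (inG P a) z -> N x z.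

Definition img {F : ruFrame} (P : GentzenRU F) (a : A P) : G F -> Prop :=
  @lhd F (fun t => t = inT P a).

Arguments rhd {F} _ _.
Arguments lhd {F} _ _.
Arguments gammaN {F} _ _.
Arguments closed {F} _.
Arguments meetF {F} _ _ _.
Arguments joinF {F} _ _ _.
Arguments circ {F} _ _ _.
Arguments mulF {F} _ _ _.
Arguments ldivF {F} _ _ _.
Arguments rdivF {F} _ _ _.
Arguments bangF {F} _ _.

(* For each connective, the Gentzen left rule puts the algebra element a * b
   into X * Y, and the right rule puts X * Y inside {a * b}^lhd, as soon as
   a in X within {a}^lhd and b in Y within {b}^lhd.  Under [cut], {c}^lhd is
   the least closed set containing c, so taking X = {a}^lhd and Y = {b}^lhd
   collapses these inclusions into equalities.  The identity axiom a N a puts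
   a into {a}^lhd, which makes a |-> {a}^lhd injective when N is antisymmetric
   on A. *)
From Stdlib Require Import FunctionalExtensionality PropExtensionality.

Set Implicit Arguments.

Section ClosedSets.
Variable F : ruFrame.
Implicit Types (X Y : G F -> Prop) (W : T F -> Prop).

Lemma subset_antisym {U : Type} (X Y : U -> Prop) :
  subset X Y -> subset Y X -> X = Y.
Proof.
  intros XY YX; apply functional_extensionality; intro u.
  apply propositional_extensionality; split; auto.
Qed.

Lemma gammaN_ext X : subset X (gammaN X).
Proof. intros x Xx t Xt; exact (Xt x Xx). Qed.

Lemma closed_lhd W : closed (lhd W).
Proof.
  apply subset_antisym; [|apply gammaN_ext].
  intros g Hg w Ww; apply Hg; intros x Wx; exact (Wx w Ww).
Qed.

Lemma closed_mem X g : closed X -> (forall t, rhd X t -> N g t) -> X g.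
Proof. intros cX Hg; rewrite <- cX; exact Hg. Qed.

Lemma closed_meetF X Y : closed X -> closed Y -> closed (meetF X Y).
Proof.
  intros cX cY; apply subset_antisym; [|apply gammaN_ext].
  intros g Hg; split.
  - apply closed_mem; [exact cX|]; intros t Xt.
    apply Hg; intros x [Xx _]; exact (Xt x Xx).
  - apply closed_mem; [exact cY|]; intros t Yt.
    apply Hg; intros y [_ Yy]; exact (Yt y Yy).
Qed.

(* Nuclearity moves the left factor x into the test element x \\ t. *)
Lemma closed_ldivF X Y : closed Y -> closed (ldivF X Y).
Proof.
  intros cY; apply subset_antisym; [|apply gammaN_ext].
  intros z Hz x Xx; apply closed_mem; [exact cY|]; intros t Yt.
  apply nuclear_l, Hz; intros w Hw; apply nuclear_l, Yt, Hw, Xx.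
Qed.

Lemma closed_rdivF X Y : closed X -> closed (rdivF X Y).
Proof.
  intros cX; apply subset_antisym; [|apply gammaN_ext].
  intros z Hz y Yy; apply closed_mem; [exact cX|]; intros t Xt.
  apply nuclear_r, Hz; intros w Hw; apply nuclear_r, Xt, Hw, Yy.
Qed.

End ClosedSets.

Section Sandwich.
Variable F : ruFrame.
Variable P : GentzenRU F.
Implicit Types (X Y Z : G F -> Prop).

Definition sandwiched (a : A P) X : Prop := X (inG P a) /\ subset X (img P a).

Lemma closed_img a : closed (img P a).
Proof. apply closed_lhd. Qed.

Lemma img_sandwiched a : sandwiched a (img P a).
Proof. split; [intros t ->; apply g_id | intros g Hg; exact Hg]. Qed.

Lemma sandwiched_N {a X x} : sandwiched a X -> X x -> N x (inT P a).
Proof. intros [_ sX] Xx; exact (sX x Xx _ eq_refl). Qed.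

Lemma oneF_sandwiched o : oneA P = Some o -> sandwiched o (oneF F).
Proof.
  intros Ho; split.
  - intros t Ht; eapply g_one2; [exact Ho|]; apply Ht; reflexivity.
  - intros g Hg t ->; apply Hg; intros x ->; eapply g_one1; exact Ho.
Qed.

Lemma meetF_sandwiched a b c X Y : closed X -> closed Y ->
  sandwiched a X -> sandwiched b Y -> meetA P a b = Some c ->
  sandwiched c (meetF X Y).
Proof.
  intros cX cY sX sY Hc; split; [split|].
  - apply closed_mem; [exact cX|]; intros t Ht.
    eapply g_meetL1; [exact Hc|]; apply Ht, sX.
  - apply closed_mem; [exact cY|]; intros t Ht.
    eapply g_meetL2; [exact Hc|]; apply Ht, sY.
  - intros g [Xg Yg] t ->.
    eapply g_meetR; [exact Hc | exact (sandwiched_N sX Xg) | exact (sandwiched_N sY Yg)].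
Qed.

Lemma joinF_sandwiched a b c X Y :
  sandwiched a X -> sandwiched b Y -> joinA P a b = Some c ->
  sandwiched c (joinF X Y).
Proof.
  intros sX sY Hc; split.
  - intros t Ht; eapply g_joinL; [exact Hc | apply Ht | apply Ht].
    + left; apply sX.
    + right; apply sY.
  - intros g Hg t ->; apply Hg; intros x [Xx|Yx].
    + eapply g_joinR1; [exact Hc|]; exact (sandwiched_N sX Xx).
    + eapply g_joinR2; [exact Hc|]; exact (sandwiched_N sY Yx).
Qed.

Lemma mulF_sandwiched a b c X Y :
  sandwiched a X -> sandwiched b Y -> mulA P a b = Some c ->
  sandwiched c (mulF X Y).
Proof.
  intros sX sY Hc; split.
  - intros t Ht; eapply g_mulL; [exact Hc|].
    apply Ht; exists (inG P a), (inG P b); repeat split; [apply sX | apply sY].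
  - intros g Hg t ->; apply Hg; intros z (x & y & Xx & Yy & ->).
    eapply g_mulR; [exact Hc | exact (sandwiched_N sX Xx) | exact (sandwiched_N sY Yy)].
Qed.

Lemma ldivF_sandwiched a b c X Y : closed Y ->
  sandwiched a X -> sandwiched b Y -> ldivA P a b = Some c ->
  sandwiched c (ldivF X Y).
Proof.
  intros cY sX sY Hc; split.
  - intros x Xx; apply closed_mem; [exact cY|]; intros t Ht.
    eapply g_ldivL; [exact Hc | exact (sandwiched_N sX Xx) | apply Ht, sY].
  - intros z Hz t ->; eapply g_ldivR; [exact Hc|].
    apply (sandwiched_N sY), Hz, sX.
Qed.

Lemma rdivF_sandwiched a b c X Y : closed X ->
  sandwiched a X -> sandwiched b Y -> rdivA P a b = Some c ->
  sandwiched c (rdivF X Y).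
Proof.
  intros cX sX sY Hc; split.
  - intros y Yy; apply closed_mem; [exact cX|]; intros t Ht.
    eapply g_rdivL; [exact Hc | exact (sandwiched_N sY Yy) | apply Ht, sX].
  - intros z Hz t ->; eapply g_rdivR; [exact Hc|].
    apply (sandwiched_N sX), Hz, sY.
Qed.

Lemma bangF_sandwiched a c X : closed X ->
  sandwiched a X -> bangA P a = Some c -> sandwiched c (bangF X).
Proof.
  intros cX sX Hc; split.
  - intros t Ht; apply Ht; split; [|eapply bang_K; exact Hc].
    apply closed_mem; [exact cX|]; intros s Hs.
    eapply g_bangL; [exact Hc|]; apply Hs, sX.
  - intros g Hg t ->; apply Hg; intros k [Xk Kk].
    eapply g_bangR; [exact Hc | exact Kk | exact (sandwiched_N sX Xk)].
Qed.

Lemma zeroF_sandwiched ez z0 o :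
  ruzCond P ez z0 -> z0 = Some o -> sandwiched o (zeroF F ez).
Proof.
  intros H Ho; destruct (H o Ho) as [o_ez ez_o]; split.
  - intros t ->; exact o_ez.
  - intros g Hg t ->; apply ez_o, Hg; reflexivity.
Qed.

Lemma img_eq_sandwiched c Z : cutCond P -> closed Z ->
  sandwiched c Z -> img P c = Z.
Proof.
  intros cut cZ [Zc sZ]; apply subset_antisym; [|exact sZ].
  intros g Hg; apply closed_mem; [exact cZ|]; intros t Ht.
  exact (cut g c t (Hg _ eq_refl) (Ht _ Zc)).
Qed.

Lemma img_inj :
  (forall a b, N (inG P a) (inT P b) -> N (inG P b) (inT P a) -> a = b) ->
  forall a b, img P a = img P b -> a = b.
Proof.
  intros antisym a b Hab; apply antisym.
  - assert (Ha := proj1 (img_sandwiched a)); rewrite Hab in Ha; exact (Ha _ eq_refl).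
  - assert (Hb := proj1 (img_sandwiched b)); rewrite <- Hab in Hb; exact (Hb _ eq_refl).
Qed.

End Sandwich.

Theorem mainTheorem11 (F : ruFrame) (P : GentzenRU F) :
  (* (1) *)
  (forall o, oneA P = Some o ->
     oneF F (inG P o) /\ subset (oneF F) (img P o)) /\
  (* (2) *)
  (forall (a b c : A P) (X Y : G F -> Prop),
     closed X -> closed Y ->
     X (inG P a) -> subset X (img P a) ->
     Y (inG P b) -> subset Y (img P b) ->
     (meetA P a b = Some c -> meetF X Y (inG P c) /\ subset (meetF X Y) (img P c)) /\
     (joinA P a b = Some c -> joinF X Y (inG P c) /\ subset (joinF X Y) (img P c)) /\
     (mulA P a b = Some c -> mulF X Y (inG P c) /\ subset (mulF X Y) (img P c)) /\
     (ldivA P a b = Some c -> ldivF X Y (inG P c) /\ subset (ldivF X Y) (img P c)) /\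
     (rdivA P a b = Some c -> rdivF X Y (inG P c) /\ subset (rdivF X Y) (img P c))) /\
  (* (3) *)
  (forall (a c : A P) (X : G F -> Prop),
     closed X -> X (inG P a) -> subset X (img P a) ->
     bangA P a = Some c -> bangF X (inG P c) /\ subset (bangF X) (img P c)) /\
  (* (4) *)
  (forall (ez : T F) (z0 : option (A P)) (o : A P),
     ruzCond P ez z0 -> z0 = Some o ->
     zeroF F ez (inG P o) /\ subset (zeroF F ez) (img P o)) /\
  (* (5) *)
  (cutCond P ->
     (forall o, oneA P = Some o -> img P o = oneF F) /\
     (forall a b c, meetA P a b = Some c -> img P c = meetF (img P a) (img P b)) /\
     (forall a b c, joinA P a b = Some c -> img P c = joinF (img P a) (img P b)) /\
     (forall a b c, mulA P a b = Some c -> img P c = mulF (img P a) (img P b)) /\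
     (forall a b c, ldivA P a b = Some c -> img P c = ldivF (img P a) (img P b)) /\
     (forall a b c, rdivA P a b = Some c -> img P c = rdivF (img P a) (img P b)) /\
     (forall a c, bangA P a = Some c -> img P c = bangF (img P a)) /\
     (forall (ez : T F) (z0 : option (A P)) (o : A P),
        ruzCond P ez z0 -> z0 = Some o -> img P o = zeroF F ez)) /\
  (* (6) *)
  ((forall a b : A P, N (inG P a) (inT P b) -> N (inG P b) (inT P a) -> a = b) ->
     forall a b : A P, img P a = img P b -> a = b).
Proof.
  pose proof (img_sandwiched P) as sImg; pose proof (closed_img P) as cImg.
  split; [intros o Ho; exact (oneF_sandwiched P Ho)|].
  split.
  { intros a b c X Y cX cY Xa sX Yb sY.
    assert (sa : sandwiched P a X) by (split; assumption).
    assert (sb : sandwiched P b Y) by (split; assumption).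
    repeat match goal with |- _ /\ _ => split end; intros Hc.
    - exact (meetF_sandwiched cX cY sa sb Hc).
    - exact (joinF_sandwiched sa sb Hc).
    - exact (mulF_sandwiched sa sb Hc).
    - exact (ldivF_sandwiched cY sa sb Hc).
    - exact (rdivF_sandwiched cX sa sb Hc). }
  split; [intros a c X cX Xa sX; exact (bangF_sandwiched cX (conj Xa sX))|].
  split; [intros ez z0 o Hz Ho; exact (zeroF_sandwiched Hz Ho)|].
  split; [|exact (@img_inj F P)].
  intros cut; assert (img_eq := fun c Z => @img_eq_sandwiched F P c Z cut).
  repeat match goal with |- _ /\ _ => split end.
  - intros o Ho; exact (img_eq _ _ (closed_lhd _ _) (oneF_sandwiched P Ho)).
  - intros a b c Hc; apply img_eq; [apply closed_meetF; apply cImg|].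
    exact (meetF_sandwiched (cImg a) (cImg b) (sImg a) (sImg b) Hc).
  - intros a b c Hc; apply img_eq; [apply closed_lhd|].
    exact (joinF_sandwiched (sImg a) (sImg b) Hc).
  - intros a b c Hc; apply img_eq; [apply closed_lhd|].
    exact (mulF_sandwiched (sImg a) (sImg b) Hc).
  - intros a b c Hc; apply img_eq; [apply closed_ldivF, cImg|].
    exact (ldivF_sandwiched (cImg b) (sImg a) (sImg b) Hc).
  - intros a b c Hc; apply img_eq; [apply closed_rdivF, cImg|].
    exact (rdivF_sandwiched (cImg a) (sImg a) (sImg b) Hc).
  - intros a c Hc; apply img_eq; [apply closed_lhd|].
    exact (bangF_sandwiched (cImg a) (sImg a) Hc).
  - intros ez z0 o Hz Ho; exact (img_eq _ _ (closed_lhd _ _) (zeroF_sandwiched Hz Ho)).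
Qed.
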